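(* Let $k\ge 2$ be a fixed integer. Then, as $n\to\infty$, $$\mu_{tsp,k}(C_n)\sim\left(1-\frac{1}{2^{k-1}}\right)n,$$ i.e. $\mu_{tsp,k}(C_n)/n\to 1-2^{-(k-1)}$.
   Context: $C_n$ is the cycle on $n$ vertices. For a set $S$ of $k$ vertices of a graph $G$ of order $n$, $\mathrm{tsp}_k(S)$ is the length (number of edge traversals, with multiplicity) of a shortest closed walk in $G$ visiting all vertices of $S$, and $\mu_{tsp,k}(G)=\binom{n}{k}^{-1}\sum_{S\subseteq V,\,|S|=k}\mathrm{tsp}_k(S)$. *)

From HB Require Import structures.
From mathcomp Require Import all_boot all_order all_algebra.
From mathcomp Require Import all_classical all_reals all_analysis.
Set Implicit Arguments. Unset Strict Implicit. Unset Printing Implicit Defensive.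
Import Order.TTheory GRing.Theory Num.Theory.

(* The cycle C_n on vertex set 'I_n = {0,...,n-1}: i ~ j iff i <> j and
   j = i+1 (mod n) or i = j+1 (mod n).  (For n >= 3 this is exactly C_n.) *)
Definition cyc_adj (n : nat) : rel 'I_n :=
  fun i j => (i != j) && ((val j == i.+1 %% n) || (val i == j.+1 %% n)).

Definition has_cwalk (n : nat) (S : {set 'I_n}) (L : nat) : bool :=
  [exists x : 'I_n, exists p : L.-tuple 'I_n,
     [&& path (@cyc_adj n) x p, last x p == x &
         [forall v in S, v \in x :: tval p]]].

(* For n >= 1 the walk
   0,1,...,n-1,n-2,...,0 of length 2(n-1) visits every vertex, so the least
   such L is < 2n+1 and this bounded search returns the true minimum. *)
Definition tsp (n : nat) (S : {set 'I_n}) : nat :=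
  find (has_cwalk S) (iota 0 (2 * n).+1).

Definition mu_tsp (R : realType) (k n : nat) : R :=
  ((\sum_(S : {set 'I_n} | #|S| == k) tsp S)%:R / ('C(n, k))%:R)%R.

From HB Require Import structures.
From mathcomp Require Import all_boot all_order all_algebra.
From mathcomp Require Import all_classical all_reals all_analysis.
From mathcomp Require Import zify ring lra.
Import Order.TTheory GRing.Theory Num.Theory numFieldNormedType.Exports.
Set Implicit Arguments. Unset Strict Implicit. Unset Printing Implicit Defensive.

(* A closed walk on C_n of length less than n misses a vertex, so measured
   clockwise from just after that vertex it is a walk on a path, and it must
   go back and forth over an arc containing everything it visits.  Hence
   tsp(S) = min(n, 2 l(S)), where l(S) is the length of the shortest arc
   containing S.  For h = floor((n-1)/2), the arcs of length h containing S
   number h + 1 - l(S) when l(S) <= h and none otherwise, so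
   n <= tsp(S) + 2 #{arcs of length h containing S} <= n + 1.  Each of the n
   arcs of length h contains binom(h+1, k) sets of size k, so averaging gives
   mu_{tsp,k}(C_n) = n - 2 n binom(ceil(n/2), k) / binom(n, k) + O(1), and
   binom(ceil(n/2), k) / binom(n, k) -> 2^-k. *)

Definition unit_steps (g : nat -> nat) (L : nat) :=
  forall i, i < L -> g i.+1 = (g i).+1 \/ g i = (g i.+1).+1.

Lemma unit_steps_dist g L : unit_steps g L ->
  forall i j, i <= j <= L -> g j <= g i + (j - i) /\ g i <= g j + (j - i).
Proof.
move=> steps i; elim=> [|j IH] /andP [ij jL].
  by move: ij; rewrite leqn0 => /eqP ->; rewrite subnn !addn0.
have [-> | ne_ij] := eqVneq i j.+1; first by rewrite subnn !addn0.
have := steps j jL; have := IH ltac:(lia); lia.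
Qed.

Lemma closed_unit_steps_spread g L : unit_steps g L -> g L = g 0 ->
  forall i j, i <= L -> j <= L -> 2 * (g j - g i) <= L.
Proof.
move=> steps closed.
have spread a b : a <= b <= L -> 2 * (g b - g a) <= L /\ 2 * (g a - g b) <= L.
  move=> abL; have := unit_steps_dist steps abL.
  have := unit_steps_dist (i := 0) (j := a) steps ltac:(lia).
  have := unit_steps_dist (i := b) (j := L) steps ltac:(lia).
  rewrite closed; lia.
move=> i j iL jL; have [ij|/ltnW ji] := leqP i j.
  by have [] := spread i j ltac:(lia).
by have [] := spread j i ltac:(lia).
Qed.

Lemma modn_succ_mod m d : (m %% d).+1 %% d = m.+1 %% d.
Proof. by rewrite -[(m %% d).+1]addn1 modnDml addn1. Qed.

Lemma tsp_le n (S : {set 'I_n}) L : has_cwalk S L -> L <= 2 * n -> tsp S <= L.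
Proof.
move=> walk L2n; rewrite /tsp leqNgt; apply/negP => /(before_find 0).
by rewrite nth_iota ?add0n ?walk.
Qed.

Lemma has_cwalk_tsp n (S : {set 'I_n}) : tsp S <= 2 * n -> has_cwalk S (tsp S).
Proof.
move=> small; have found : has (has_cwalk S) (iota 0 (2 * n).+1).
  by rewrite has_find size_iota ltnS.
by have := nth_find 0 found; rewrite nth_iota ?add0n // ltnS.
Qed.

Section Cycle.
Variable n : nat.
Local Notation N := n.+1.

Definition cw_dist (v y : nat) := (y + N - v) %% N.

Definition arc (v t : nat) : {set 'I_N} := [set y : 'I_N | cw_dist v y <= t].

Definition covering_arcs (h : nat) (S : {set 'I_N}) : {set 'I_N} :=
  [set v : 'I_N | S \subset arc v h].

Lemma cw_dist_lt v y : cw_dist v y < N.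
Proof. by rewrite ltn_pmod. Qed.

Lemma cw_distK v y : v < N -> y < N -> (v + cw_dist v y) %% N = y.
Proof.
move=> vN yN; rewrite modnDmr.
have -> : v + (y + N - v) = y + N by lia.
by rewrite modnDr modn_small.
Qed.

Lemma cw_dist_add v j : v < N -> j < N -> cw_dist v ((v + j) %% N) = j.
Proof.
move=> vN jN; rewrite /cw_dist -addnBA; last by lia.
rewrite modnDml.
have -> : v + j + (N - v) = j + N by lia.
by rewrite modnDr modn_small.
Qed.

Lemma cw_distD v w d y : v < N -> y < N -> w = (v + d) %% N ->
  d + cw_dist w y < N -> cw_dist v y = d + cw_dist w y.
Proof.
move=> vN yN wE small.
have yE : y = (v + (d + cw_dist w y)) %% N.
  by rewrite addnA -modnDml -wE cw_distK // wE ltn_pmod.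
by rewrite {1}yE cw_dist_add.
Qed.

Lemma cw_distB v w d y : v < N -> y < N -> w = (v + d) %% N ->
  d <= cw_dist v y -> cw_dist w y = cw_dist v y - d.
Proof.
move=> vN yN wE dy.
have yE : y = (w + (cw_dist v y - d)) %% N.
  by rewrite wE modnDml -addnA subnKC // cw_distK.
by rewrite {1}yE cw_dist_add ?wE ?ltn_pmod //; have := cw_dist_lt v y; lia.
Qed.

Lemma cw_dist_inj (x v v' : 'I_N) : cw_dist v x = cw_dist v' x -> v = v'.
Proof.
move=> e; apply: val_inj => /=; apply/eqP.
rewrite -(modn_small (ltn_ord v)) -(modn_small (ltn_ord v')).
by rewrite -(eqn_modDr (cw_dist v x)) {2}e !cw_distK.
Qed.

Lemma cw_distS v y : v < N -> y < N -> cw_dist v y < n ->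
  cw_dist v (y.+1 %% N) = (cw_dist v y).+1.
Proof.
move=> vN yN small.
by rewrite -{1}(cw_distK vN yN) modn_succ_mod -addnS cw_dist_add.
Qed.

Lemma cw_dist_succ_lt (m y : 'I_N) : y != m -> cw_dist (m.+1 %% N) y < n.
Proof.
move=> ym; have := cw_dist_lt (m.+1 %% N) y.
rewrite ltnS leq_eqVlt => /orP [/eqP yE|//]; case/eqP: ym; apply/val_inj.
rewrite /= -(cw_distK (ltn_pmod m.+1 (ltn0Sn n)) (ltn_ord y)) yE modnDml addSnnS.
by rewrite modnDr modn_small.
Qed.

Lemma sub_arc_of_range (S : {set 'I_N}) v a b : v < N ->
  (forall y, y \in S -> a <= cw_dist v y <= b) -> S \subset arc ((v + a) %% N) (b - a).
Proof.
move=> vN range; apply/fintype.subsetP => y yS; have /andP [ay yb] := range y yS.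
by rewrite inE (cw_distB vN (ltn_ord y) erefl ay); lia.
Qed.

Lemma cyc_adjC (a b : 'I_N) : cyc_adj a b = cyc_adj b a.
Proof. by rewrite /cyc_adj eq_sym orbC. Qed.

Lemma cyc_adj_succ (a b : 'I_N) : 0 < n -> b = a.+1 %% N :> nat -> cyc_adj a b.
Proof.
move=> n0 bE; rewrite /cyc_adj /= bE eqxx /= andbT.
apply/eqP => ab; move: bE; rewrite -ab.
have [aN|aN] := ltnP a.+1 N; first by rewrite modn_small //; lia.
have -> : a.+1 = N by have := ltn_ord a; lia.
by rewrite modnn; lia.
Qed.

Lemma has_cwalk_unit_steps (S : {set 'I_N}) (w : nat) (g : nat -> nat) L :
  0 < n -> unit_steps g L -> (w + g L) %% N = (w + g 0) %% N ->
  (forall y : 'I_N, y \in S -> exists2 j, j <= L & y = (w + g j) %% N :> nat) ->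
  has_cwalk S L.
Proof.
move=> n0 steps closed visits.
pose f j : 'I_N := inord ((w + g j) %% N).
have fE j : f j = (w + g j) %% N :> nat by rewrite inordK // ltn_pmod.
pose p := mkseq (fun i => f i.+1) L.
have size_p : size p == L by rewrite size_mkseq.
have nth_p i : i <= L -> nth (f 0) (f 0 :: p) i = f i.
  by case: i => [|i] //= iL; rewrite nth_mkseq.
apply/existsP; exists (f 0); apply/existsP; exists (Tuple size_p).
apply/and3P; split => /=.
- apply/(pathP (f 0)) => i; rewrite size_mkseq => iL.
  rewrite nth_p ?nth_mkseq //; last exact: ltnW.
  case: (steps i iL) => e; [|rewrite cyc_adjC]; apply: cyc_adj_succ => //;
    by rewrite !fE e addnS modn_succ_mod.
- rewrite (last_nth (f 0)) (eqP size_p) nth_p //.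
  by apply/eqP/val_inj; rewrite /= !fE closed.
- apply/forallP => y; apply/implyP => yS; have [j jL yE] := visits y yS.
  have -> : y = f j by apply/val_inj; rewrite /= fE.
  by rewrite -nth_p //; apply: mem_nth; rewrite /= size_mkseq ltnS.
Qed.

Lemma closed_walk_avoids (x : 'I_N) (p : seq 'I_N) :
  0 < n -> last x p = x -> size p < N -> exists m : 'I_N, m \notin x :: p.
Proof.
move=> n0 closed small.
have [m mp|all_in] := pickP (fun m => m \notin x :: p); first by exists m.
have visited : {subset x :: p <= if p is [::] then [:: x] else p}.
  case: p closed {small all_in} => [_ z //|y q /= closed z].
  by rewrite in_cons => /orP [/eqP ->|//]; rewrite -[X in X \in _]closed mem_last.
have : #|'I_N| <= size (if p is [::] then [:: x] else p).
  apply: leq_trans (card_size _); apply: subset_leq_card.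
  by apply/fintype.subsetP => z _; apply: visited; have := all_in z => /negbFE.
by rewrite card_ord; case: p {closed visited all_in} small => /= [|y q]; lia.
Qed.

Lemma closed_walk_within_arc (S : {set 'I_N}) L :
  0 < n -> has_cwalk S L -> L < N ->
  exists (w : 'I_N) (t : nat), S \subset arc w t /\ 2 * t <= L.
Proof.
move=> n0 /existsP [x /existsP [p /and3P [walk /eqP closed visits]]] LN.
have size_p : size p = L := size_tuple p.
have [m mp] : exists m : 'I_N, m \notin x :: p.
  by apply: closed_walk_avoids; rewrite ?size_p.
(* Measured clockwise from the successor o of the missed vertex m, the walk
   moves by +-1 at each step and never wraps around. *)
pose o := m.+1 %% N.
have oN : o < N by rewrite ltn_pmod.
pose s i := cw_dist o (nth x (x :: p) i).
have nth_ne i : i <= L -> nth x (x :: p) i != m.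
  by move=> iL; apply: contraNneq mp => <-; apply: mem_nth; rewrite /= size_p ltnS.
have steps : unit_steps s L.
  move=> i iL; move/(pathP x): walk => /(_ i); rewrite size_p => /(_ iL).
  rewrite /cyc_adj => /andP [_ /orP [/eqP e|/eqP e]]; [left|right];
    rewrite /s /= e cw_distS ?ltn_ord // cw_dist_succ_lt //;
    [exact/nth_ne/ltnW | exact: (nth_ne i.+1)].
have closed_s : s L = s 0 by rewrite /s -[X in nth _ _ X]size_p -last_nth closed.
case: (set_0Vmem S) => [->|[y0 y0S]]; first by exists x, 0; rewrite finset.sub0set.
have [a aS amin] := arg_minnP (fun y : 'I_N => cw_dist o y) y0S.
have [b bS bmax] := arg_maxnP (fun y : 'I_N => cw_dist o y) y0S.
have index_S y : y \in S -> exists2 i, i <= L & s i = cw_dist o y.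
  move=> yS; have yp : y \in x :: p by move/forallP: visits => /(_ y); rewrite yS.
  exists (index y (x :: p)); last by rewrite /s nth_index.
  by have := index_mem y (x :: p); rewrite yp /= size_p ltnS.
have [ia iaL sa] := index_S a aS; have [ib ibL sb] := index_S b bS.
have := closed_unit_steps_spread steps closed_s iaL ibL; rewrite sa sb => spread.
exists (inord ((o + cw_dist o a) %% N)), (cw_dist o b - cw_dist o a); split=> //.
rewrite inordK ?ltn_pmod //; apply: sub_arc_of_range => // y yS.
by apply/andP; split; [exact: amin | exact: bmax].
Qed.

Lemma card_arc v h : v < N -> h < N -> #|arc v h| = h.+1.
Proof.
move=> vN hN.
pose u (j : 'I_h.+1) : 'I_N := inord ((v + j) %% N).
have uE j : u j = (v + j) %% N :> nat by rewrite inordK // ltn_pmod.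
have jN (j : 'I_h.+1) : j < N by apply: leq_trans (ltn_ord j) hN.
have -> : arc v h = [set u j | j : 'I_h.+1].
  apply/finset.setP => y; rewrite inE; apply/idP/imsetP => [yv|[j _ ->]].
    exists (Ordinal (yv : cw_dist v y < h.+1)) => //.
    by apply/val_inj; rewrite /= uE cw_distK.
  by rewrite uE cw_dist_add // -ltnS.
rewrite card_imset ?card_ord // => j1 j2 e; apply/val_inj => /=.
by rewrite -(cw_dist_add vN (jN j1)) -(cw_dist_add vN (jN j2)) -!uE e.
Qed.

Lemma sum_card_covering_arcs h k : h < N ->
  \sum_(S : {set 'I_N} | #|S| == k) #|covering_arcs h S| = N * 'C(h.+1, k).
Proof.
move=> hN; under eq_bigr => S _ do rewrite -sum1dep_card.
rewrite (exchange_big_dep xpredT) //=.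
under eq_bigr => v _.
  rewrite sum1dep_card.
  have -> : [set S : {set 'I_N} | (#|S| == k) && (S \subset arc v h)] =
            [set S : {set 'I_N} | S \subset arc v h & #|S| == k].
    by apply/finset.setP => S; rewrite !inE andbC.
  rewrite cards_draws card_arc //.
  over.
by rewrite sum_nat_const card_ord.
Qed.

Lemma card_covering_arcs_ge (S : {set 'I_N}) (w : 'I_N) t h :
  t <= h -> h < N -> S \subset arc w t -> h.+1 - t <= #|covering_arcs h S|.
Proof.
move=> th hN Sw.
pose v (j : 'I_(h.+1 - t)) : 'I_N := inord ((w + N - j) %% N).
have vE j : w = (v j + j) %% N :> nat.
  rewrite inordK ?ltn_pmod // modnDml.
  have -> : w + N - j + j = w + N by have := ltn_ord j; lia.
  by rewrite modnDr modn_small.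
have dist_vw j : cw_dist (v j) w = j.
  by rewrite (vE j) cw_dist_add //; have := ltn_ord j; lia.
have v_inj : injective v.
  by move=> j1 j2 e; apply/val_inj; rewrite /= -(dist_vw j1) -(dist_vw j2) e.
have cover j : v j \in covering_arcs h S.
  rewrite inE; apply/fintype.subsetP => y yS.
  have := fintype.subsetP Sw y yS; rewrite !inE => wy.
  by rewrite (cw_distD (ltn_ord (v j)) (ltn_ord y) (vE j)); have := ltn_ord j; lia.
have sub : [set v j | j : 'I_(h.+1 - t)] \subset covering_arcs h S.
  by apply/fintype.subsetP => _ /imsetP [j _ ->]; exact: cover.
by apply: leq_trans (subset_leq_card sub); rewrite card_imset // card_ord.
Qed.

Lemma card_covering_arcs_le (S : {set 'I_N}) h :
  2 * h < N -> S != finset.set0 -> covering_arcs h S != finset.set0 ->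
  exists (w : 'I_N) (t : nat), S \subset arc w t /\ t + #|covering_arcs h S| <= h.+1.
Proof.
move=> hN /finset.set0Pn [x xS] /finset.set0Pn [v0 v0V].
(* A covering start v is determined by cw_dist v x, which ranges over an
   interval of length d; the extreme starts v1 and v2 = v1 + d leave S inside
   an arc of length h - d. *)
set V := covering_arcs h S.
have in_arc v y : v \in V -> y \in S -> cw_dist v y <= h.
  by rewrite inE => /fintype.subsetP Sv /Sv; rewrite inE.
pose e (v : 'I_N) := cw_dist v x.
have [v1 v1V emax] := arg_maxnP e v0V.
have [v2 v2V emin] := arg_minnP e v0V.
pose d := e v1 - e v2.
have d_le_h : d <= h by have := in_arc v1 x v1V xS; rewrite /d /e; lia.
have cardV : #|V| <= d.+1.
  rewrite cardE -(size_map e) -(size_iota (e v2) d.+1); apply: uniq_leq_size.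
    by rewrite map_inj_in_uniq ?enum_uniq // => u u' _ _; apply: cw_dist_inj.
  move=> _ /mapP [u uV ->]; rewrite mem_enum in uV; rewrite mem_iota.
  by have := emax u uV; have := emin u uV; rewrite /d; lia.
have v2E : v2 = (v1 + d) %% N :> nat.
  apply/eqP; rewrite -(modn_small (ltn_ord v2)) -(eqn_modDr (e v2)) -addnA subnK.
    by rewrite /e (cw_distK (ltn_ord v2) (ltn_ord x)) (cw_distK (ltn_ord v1) (ltn_ord x)).
  exact: emax.
exists v2, (h - d); split; last by lia.
apply/fintype.subsetP => y yS; rewrite inE.
have v1y : cw_dist v1 y = d + cw_dist v2 y.
  by apply: cw_distD v2E _ => //; have := in_arc v2 y v2V yS; lia.
by have := in_arc v1 y v1V yS; lia.
Qed.

Lemma tsp_le_cycle (S : {set 'I_N}) : 0 < n -> tsp S <= N.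
Proof.
move=> n0; apply: tsp_le; last by lia.
apply: (@has_cwalk_unit_steps S 0 id) => //; first by left.
  by rewrite add0n modnn.
by move=> y _; exists y; [exact: ltnW | rewrite add0n modn_small].
Qed.

Lemma tsp_le_arc (S : {set 'I_N}) (w : 'I_N) t :
  0 < n -> t <= N -> S \subset arc w t -> tsp S <= 2 * t.
Proof.
move=> n0 tN Sw; apply: tsp_le; last by lia.
pose g j := if j <= t then j else 2 * t - j.
apply: (@has_cwalk_unit_steps S w g) => //.
- by move=> i it; rewrite /g; case: (leqP i t); case: (leqP i.+1 t); lia.
- by congr (_ %% _); rewrite /g leq0n; case: leqP; lia.
- move=> y yS; have := fintype.subsetP Sw y yS; rewrite inE => wy.
  by exists (cw_dist w y); rewrite /g ?wy ?cw_distK //; lia.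
Qed.

Lemma tsp_within_arc (S : {set 'I_N}) : 0 < n -> tsp S < N ->
  exists (w : 'I_N) (t : nat), S \subset arc w t /\ 2 * t <= tsp S.
Proof.
by move=> n0 small; apply: closed_walk_within_arc => //; apply: has_cwalk_tsp; lia.
Qed.

Lemma tsp_covering_arcs_bounds (S : {set 'I_N}) : 1 < n -> S != finset.set0 ->
  N <= tsp S + 2 * #|covering_arcs n./2 S| <= N.+1.
Proof.
move=> n1 S0; have n0 : 0 < n by lia.
apply/andP; split.
  have [tN|tN] := leqP N (tsp S); first by lia.
  have [w [t [Sw tS]]] := tsp_within_arc n0 tN.
  have := card_covering_arcs_ge (h := n./2) (ltac:(lia) : t <= n./2) (ltac:(lia)) Sw.
  by lia.
have [->|V0] := eqVneq (covering_arcs n./2 S) finset.set0.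
  by rewrite finset.cards0; have := tsp_le_cycle S n0; lia.
have [w [t [Sw tV]]] := card_covering_arcs_le (ltac:(lia) : 2 * n./2 < N) S0 V0.
by have := tsp_le_arc n0 (ltac:(lia) : t <= N) Sw; lia.
Qed.

End Cycle.

Lemma sum_tsp_bounds m k : 1 < m -> 0 < k ->
  m.+1 * 'C(m.+1, k)
  <= \sum_(S : {set 'I_m.+1} | #|S| == k) tsp S + 2 * (m.+1 * 'C(uphalf m.+1, k))
  <= m.+2 * 'C(m.+1, k).
Proof.
move=> m1 k0.
have card_k c : \sum_(S : {set 'I_m.+1} | #|S| == k) c = c * 'C(m.+1, k).
  by rewrite -[in LHS](muln1 c) -big_distrr sum1dep_card card_draws card_ord.
change (uphalf m.+1) with (m./2).+1.
rewrite -!card_k -(@sum_card_covering_arcs m m./2 k); last by lia.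
rewrite big_distrr -big_split /=.
suff bounds (S : {set 'I_m.+1}) :
    #|S| == k -> m.+1 <= tsp S + 2 * #|covering_arcs m./2 S| <= m.+2.
  by apply/andP; split; apply: leq_sum => S /bounds /andP [lo hi].
by move=> /eqP Sk; apply: tsp_covering_arcs_bounds; rewrite // -card_gt0 Sk.
Qed.

Local Open Scope classical_set_scope.
Local Open Scope ring_scope.

Section Asymptotics.
Variable R : realType.

Lemma cvg_harmonic_perturbation (u v : nat -> R) (l C : R) (N0 : nat) :
  u @ \oo --> l -> (forall n, (N0 <= n)%N -> `|v n - u n| <= C / n.+1%:R) ->
  v @ \oo --> l.
Proof.
move=> ul vu.
have err0 : (fun n : nat => C / n.+1%:R) @ \oo --> 0.
  by rewrite -(mulr0 C); apply: cvgMl_tmp; exact: cvg_harmonic.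
apply: (@squeeze_cvgr _ _ _ _ (fun n => u n - C / n.+1%:R) (fun n => u n + C / n.+1%:R)).
- by exists N0 => // n /= N0n; rewrite -ler_distl; exact: vu.
- by rewrite -(subr0 l); apply: cvgB.
- by rewrite -(addr0 l); apply: cvgD.
Qed.

Lemma cvg_uphalf_sub_ratio (i : nat) :
  (fun n : nat => (uphalf n - i)%:R / (n - i)%:R : R) @ \oo --> (2^-1 : R).
Proof.
apply: (cvg_harmonic_perturbation (u := fun=> 2^-1) (C := i.+1%:R) (N0 := (2 * i).+1)).
  exact: cvg_cst.
move=> n ni.
have d_gt0 : 0 < (n - i)%:R :> R by rewrite ltr0n; lia.
have num_le : `|(2 * (uphalf n - i))%:R - (n - i)%:R| <= i.+1%:R :> R.
  by rewrite ler_distl lerBlDr -!natrD !ler_nat; lia.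
have den_ge : n.+1%:R <= 2 * (n - i)%:R :> R by rewrite -natrM ler_nat; lia.
have -> : (uphalf n - i)%:R / (n - i)%:R - 2^-1 =
          ((2 * (uphalf n - i))%:R - (n - i)%:R) / (2 * (n - i)%:R) :> R.
  by rewrite natrM; field; rewrite lt0r_neq0.
rewrite normf_div (ger0_norm (_ : 0 <= 2 * _)) ?mulr_ge0 ?ler0n //.
rewrite ler_pdivrMr ?mulr_gt0 // mulrAC ler_pdivlMr ?ltr0n //.
by apply: ler_pM; rewrite ?normr_ge0 ?ler0n.
Qed.

Lemma bin_ratio_prod a n k : (k <= n)%N ->
  'C(a, k)%:R / 'C(n, k)%:R = \prod_(i < k) ((a - i)%:R / (n - i)%:R) :> R.
Proof.
move=> kn; rewrite prodf_div -!natr_prod -!ffact_prod -!bin_ffact !natrM.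
by field; rewrite !pnatr_eq0 -!lt0n fact_gt0 bin_gt0 kn.
Qed.

Lemma cvg_bin_uphalf_ratio k :
  (fun n : nat => 'C(uphalf n, k)%:R / 'C(n, k)%:R : R) @ \oo --> (2^-k : R).
Proof.
have prod_cvg : (fun n : nat => \prod_(i < k) ((uphalf n - i)%:R / (n - i)%:R : R))
                  @ \oo --> \prod_(i < k) (2^-1 : R).
  by apply: (cvg_big (@mul_continuous R)) => // i _; exact: cvg_uphalf_sub_ratio.
rewrite prodr_const card_ord exprVn in prod_cvg.
apply: cvg_trans prod_cvg; apply: near_eq_cvg.
by exists k => // n /= kn; rewrite bin_ratio_prod.
Qed.

Lemma ratio_error_le (t c a x : R) : 0 < c -> 1 <= x ->
  x * c <= t + 2 * (x * a) <= (x + 1) * c ->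
  `|t / c / x - (1 - 2 * (a / c))| <= 2 / (x + 1).
Proof.
move=> c_gt0 x_ge1 /andP [lo hi].
have x_gt0 : 0 < x by apply: lt_le_trans x_ge1.
have xc_gt0 : 0 < x * c by rewrite mulr_gt0.
have -> : t / c / x - (1 - 2 * (a / c)) = (t + 2 * (x * a) - x * c) / (x * c).
  by field; rewrite !lt0r_neq0.
have : 0 <= t + 2 * (x * a) - x * c <= c by apply/andP; split; lra.
move: (t + 2 * (x * a) - x * c) => w /andP [w_ge0 w_le_c].
rewrite ger0_norm ?divr_ge0 ?(ltW xc_gt0) // ler_pdivrMr // mulrAC.
by rewrite ler_pdivlMr; [nra | lra].
Qed.

End Asymptotics.

Theorem lemma1 (R : realType) (k : nat) (hk : (2 <= k)%N) :
  (fun n : nat => mu_tsp R k n / n%:R) @ \oo --> (1 - 2 ^- (k - 1) : R).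
Proof.
have -> : 1 - 2 ^- (k - 1) = 1 - 2 * 2 ^- k :> R.
  by case: k hk => // k _; rewrite subn1 /= exprS invfM mulrA divff ?mul1r.
apply: (cvg_harmonic_perturbation (C := 2) (N0 := k.+2)
  (u := fun n => 1 - 2 * ('C(uphalf n, k)%:R / 'C(n, k)%:R))).
  by apply: cvgB; [exact: cvg_cst | apply: cvgMl_tmp; exact: cvg_bin_uphalf_ratio].
case=> [//|m] km; rewrite /mu_tsp -[m.+2%:R]natr1.
have /andP [lo hi] := @sum_tsp_bounds m k ltac:(lia) ltac:(lia).
apply: ratio_error_le.
- by rewrite ltr0n bin_gt0; lia.
- by rewrite ler1n.
- by rewrite natr1 -!natrM -natrD !ler_nat lo hi.
Qed.
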